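(* Let $p\geq1$ be an integer, $\tau>0$, and $w=(w_0,\dots,w_{p-1})$ with all $w_j>0$ and $\sum_{j=0}^{p-1}w_j=1$. Let $M_w:E\to E$ be the weighted moving average defined on $E=l^\infty(\mathbb{N})$ by $M_w(x)=y$ with $$y_n=\frac{\sum_{j=p-1-n}^{p-1}w_jx_{n-p+1+j}}{\sum_{j=p-1-n}^{p-1}w_j}\ (0\le n\le p-2),\qquad y_n=\sum_{j=0}^{p-1}w_jx_{n-p+1+j}\ (n\geq p-1).$$ Then for every polynomial $P=\sum_{k=0}^da_kX^k\in\mathbb{R}[X]$, $$lag(P(M_w))=lag(M_w)\sum_{k=0}^d k a_k=lag(M_w)\,P'(1).$$
   Context: Here $P(M_w)=\sum_k a_k M_w^k$ (with $M_w^0=\mathrm{id}$). For every $k$, $M_w^k(x)_n=\sum_{i_1,\dots,i_k=0}^{p-1}w_{i_1}\cdots w_{i_k}x_{n-k(p-1)+i_1+\cdots+i_k}$ for $n\ge k(p-1)$, so $P(M_w)$ acts, for all $n\geq d(p-1)$, as a fixed finite weighted sum of $x_{n-q+1},\dots,x_n$ with $q=d(p-1)+1$. Lag: if $M:E\to E$ is linear and there are an integer $q\ge1$ and reals $v_0,\dots,v_{q-1}$ such that $M(x)_n=\sum_{j=0}^{q-1}v_jx_{n-q+1+j}$ for all $x\in E$ and all $n\geq q-1$, then $lag(M)=\tau\sum_{j=0}^{q-1}v_j(q-1-j)$, where $\tau>0$ is the fixed time step between consecutive observations. *)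

From HB Require Import structures.
From mathcomp Require Import all_boot all_order all_algebra.
From mathcomp Require Import reals.
Set Implicit Arguments. Unset Strict Implicit. Unset Printing Implicit Defensive.
Import Order.TTheory GRing.Theory Num.Theory.
Local Open Scope ring_scope.

(* Sequences indexed by nat; E = l^oo(N) is the set of bounded sequences. *)
Definition bounded (R : realType) (x : nat -> R) : Prop :=
  exists B : R, forall n, `|x n| <= B.

(* Weighted moving average M_w with weights w_0..w_{p-1} (w j, j < p).
   The index n-p+1+j is written (n + 1 + j - p)%N; it is never truncated
   in the ranges used. *)
Definition Mw (R : realType) (p : nat) (w : nat -> R) (x : nat -> R) (n : nat) : R :=
  if (n < p.-1)%N then
    (\sum_(j < p | (p.-1 - n <= j)%N) w j * x (n.+1 + j - p)%N) /
    (\sum_(j < p | (p.-1 - n <= j)%N) w j)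
  else \sum_(j < p) w j * x (n.+1 + j - p)%N.

Definition poly_op (R : realType) (P : {poly R})
    (M : (nat -> R) -> (nat -> R)) (x : nat -> R) (n : nat) : R :=
  \sum_(k < size P) P`_k * iter k M x n.

Definition linear_on_E (R : realType) (M : (nat -> R) -> (nat -> R)) : Prop :=
  (forall x, bounded x -> bounded (M x)) /\
  (forall (a : R) x y, bounded x -> bounded y ->
     M (fun n => a * x n + y n) = (fun n => a * M x n + M y n)).

Definition is_lag (R : realType) (tau : R) (M : (nat -> R) -> (nat -> R)) (L : R) : Prop :=
  linear_on_E M /\
  exists (q : nat) (v : nat -> R),
    (1 <= q)%N /\
    (forall x, bounded x -> forall n, (q.-1 <= n)%N ->
        M x n = \sum_(j < q) v j * x (n.+1 + j - q)%N) /\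
    L = tau * \sum_(j < q) v j * (q.-1 - j)%:R.

From HB Require Import structures.
From mathcomp Require Import all_boot all_order all_algebra.
From mathcomp Require Import reals.
From mathcomp Require Import boolp zify.
Import Order.TTheory GRing.Theory Num.Theory.
Local Open Scope ring_scope.
Set Implicit Arguments. Unset Strict Implicit.

(* For large n every operator in sight is a causal convolution
   x |-> (sum_e h_e x_(n-e))_n by a polynomial h, its transfer function:
   M_w has transfer function W = sum_j w_j X^(p-1-j), so M_w^k has W^k and
   P(M_w) has P o W.  The moving-window coefficients of such an operator are
   the coefficients of h read backwards (test on unit impulses), so its lag
   is tau * h'(1).  Since W(1) = sum_j w_j = 1, the chain rule gives
   (P o W)'(1) = P'(1) W'(1). *)

Section Convolution.
Variable R : nzRingType.
Implicit Types (h g : {poly R}) (x v : nat -> R).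

Definition conv h x (n : nat) : R := \sum_(e < n.+1) h`_e * x (n - e)%N.

Lemma conv_coefM h x m n : (m <= n)%N ->
  conv h x m = (h * \poly_(i < n.+1) x i)`_m.
Proof.
move=> le_mn; rewrite coefM; apply: eq_bigr => i _.
by rewrite coef_poly ifT //; have := ltn_ord i; lia.
Qed.

Lemma conv_mul h g x n : conv h (conv g x) n = conv (h * g) x n.
Proof.
rewrite (conv_coefM (h * g) x (leqnn n)) -mulrA coefM; apply: eq_bigr => i _.
by rewrite (conv_coefM _ _ (leq_subr i n)).
Qed.

Lemma conv1 x n : conv 1 x n = x n.
Proof.
rewrite /conv big_ord_recl coef1 mul1r subn0 big1 ?addr0 // => i _.
by rewrite coef1 mul0r.
Qed.

Lemma conv_sumZ m (c : nat -> R) (G : nat -> {poly R}) x n :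
  conv (\sum_(k < m) c k *: G k) x n = \sum_(k < m) c k * conv (G k) x n.
Proof.
rewrite /conv; under eq_bigr => e _ do rewrite coef_sum mulr_suml.
rewrite exchange_big; apply: eq_bigr => k _; rewrite mulr_sumr.
by apply: eq_bigr => e _; rewrite coefZ mulrA.
Qed.

Lemma conv_wide h x n K : (size h <= K)%N -> (K <= n.+1)%N ->
  conv h x n = \sum_(e < K) h`_e * x (n - e)%N.
Proof.
move=> le_hK le_Kn.
rewrite (big_ord_widen _ (fun e => h`_e * x (n - e)%N) le_Kn) [RHS]big_mkcond.
apply: eq_bigr => e _; case: ltnP => // le_Ke.
by rewrite nth_default ?mul0r // (leq_trans le_hK).
Qed.

Lemma conv_impulse h m n : (m <= n)%N ->
  conv h (fun i => (i == m)%:R) n = h`_(n - m).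
Proof.
move=> le_mn; rewrite (conv_coefM _ _ (leqnn n)).
have -> : \poly_(i < n.+1) (i == m)%:R = 'X^m :> {poly R}.
  apply/polyP => i; rewrite coef_poly coefXn.
  by case: ltnP => // lt_ni; case: eqP => // ei; lia.
by rewrite coefMXn ltnNge le_mn.
Qed.

(* The weight v j multiplies x_(n-(q-1-j)), i.e. acts with delay q-1-j. *)
Definition window_poly (q : nat) (v : nat -> R) : {poly R} :=
  \poly_(d < q) v (q.-1 - d)%N.

Lemma window_conv q v x n : (q.-1 <= n)%N ->
  \sum_(j < q) v j * x (n.+1 + j - q)%N = conv (window_poly q v) x n.
Proof.
move=> le_qn; rewrite (@conv_wide _ _ _ q) ?size_poly //; last by lia.
rewrite [RHS](reindex_inj rev_ord_inj); apply: eq_bigr => j _ /=.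
have lt_jq := ltn_ord j; rewrite coef_poly ifT; last by lia.
by congr (v _ * x _); lia.
Qed.

Lemma window_poly_coefs h q : (size h <= q)%N ->
  window_poly q (fun j => h`_(q.-1 - j)) = h.
Proof.
move=> le_hq; apply/polyP => d; rewrite coef_poly.
case: ltnP => [lt_dq | le_qd]; first by congr (h`_ _); lia.
by rewrite nth_default // (leq_trans le_hq).
Qed.

Lemma horner1_window_poly q v : (window_poly q v).[1] = \sum_(j < q) v j.
Proof.
rewrite (horner_coef_wide _ (size_poly _ _)) [RHS](reindex_inj rev_ord_inj).
apply: eq_bigr => j _ /=; have lt_jq := ltn_ord j.
by rewrite expr1n mulr1 coef_poly ifT; [congr v | ]; lia.
Qed.

Lemma horner1_deriv_wide h K : (size h <= K)%N ->
  h^`().[1] = \sum_(k < K) k%:R * h`_k.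
Proof.
move=> le_hK.
have le_h'K : (size h^`() <= K)%N.
  apply/leq_sizeP => j le_Kj.
  by rewrite coef_deriv nth_default ?mul0rn // (leq_trans le_hK (leqW le_Kj)).
rewrite (horner_coef_wide _ le_h'K).
case: K le_hK le_h'K => [|K] le_hK _; first by rewrite !big_ord0.
rewrite big_ord_recr big_ord_recl /= mul0r add0r coef_deriv.
rewrite (nth_default _ le_hK) mul0rn mul0r addr0.
by apply: eq_bigr => k _; rewrite coef_deriv expr1n mulr1 /bump leq0n add1n mulr_natl.
Qed.

Lemma horner1_deriv h : h^`().[1] = \sum_(k < size h) k%:R * h`_k.
Proof. exact: horner1_deriv_wide. Qed.

Lemma horner1_deriv_window_poly q v :
  (window_poly q v)^`().[1] = \sum_(j < q) v j * (q.-1 - j)%:R.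
Proof.
rewrite (horner1_deriv_wide (size_poly _ _)) (reindex_inj rev_ord_inj).
apply: eq_bigr => j _ /=; have lt_jq := ltn_ord j.
by rewrite mulr_natl mulr_natr coef_poly ifT; [congr (v _ *+ _) | ]; lia.
Qed.

Lemma iter_conv (M : (nat -> R) -> nat -> R) h N :
  (size h <= N.+1)%N -> (forall x n, (N <= n)%N -> M x n = conv h x n) ->
  forall k x n, (k * N <= n)%N -> iter k M x n = conv (h ^+ k) x n.
Proof.
move=> size_h M_conv k x; elim: k => [|k IHk] n le_kNn; first by rewrite expr0 conv1.
rewrite iterS M_conv; last by rewrite mulSn in le_kNn; lia.
rewrite exprS -conv_mul /conv; apply: eq_bigr => e _.
case: (ltnP e (size h)) => [lt_eh | le_he]; last by rewrite nth_default ?mul0r.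
by rewrite IHk //; rewrite mulSn in le_kNn; lia.
Qed.

End Convolution.

Section Operators.
Variable R : realType.
Implicit Types (x : nat -> R).

Lemma poly_op_conv (M : (nat -> R) -> nat -> R) (h P : {poly R}) N :
  (size h <= N.+1)%N -> (forall x n, (N <= n)%N -> M x n = conv h x n) ->
  forall x n, (size P * N <= n)%N -> poly_op P M x n = conv (P \Po h) x n.
Proof.
move=> size_h M_conv x n le_PNn; rewrite comp_polyE conv_sumZ; apply: eq_bigr => k _.
by rewrite (iter_conv size_h M_conv) // (leq_trans _ le_PNn) // leq_mul2r ltnW ?orbT.
Qed.

Lemma Mw_conv p (w : nat -> R) x n : (p.-1 <= n)%N ->
  Mw p w x n = conv (window_poly p w) x n.
Proof. by move=> le_pn; rewrite /Mw ltnNge le_pn window_conv. Qed.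

Lemma bounded_eventually x N B : (forall n, (N <= n)%N -> `|x n| <= B) -> bounded x.
Proof.
move=> xB; have B_ge0 : 0 <= B by apply: le_trans (xB N (leqnn N)).
exists (\sum_(m < N) `|x m| + B) => n.
case: (ltnP n N) => [lt_nN | le_Nn]; last by rewrite ler_wpDl ?sumr_ge0 ?xB.
by rewrite (bigD1 (Ordinal lt_nN)) //= -addrA lerDl addr_ge0 ?sumr_ge0.
Qed.

Lemma bounded_sum m (F : nat -> nat -> R) :
  (forall k, bounded (F k)) -> bounded (fun n => \sum_(k < m) F k n).
Proof.
move=> bF; elim: m => [|m [B sumB]]; first by exists 0 => n; rewrite big_ord0 normr0.
have [C FC] := bF m; exists (B + C) => n; rewrite big_ord_recr /=.
exact: le_trans (ler_normD _ _) (lerD _ _).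
Qed.

Lemma bounded_scale (c : R) x : bounded x -> bounded (fun n => c * x n).
Proof.
by move=> [B xB]; exists (`|c| * B) => n; rewrite normrM ler_wpM2l.
Qed.

Lemma linear_iter (M : (nat -> R) -> nat -> R) k :
  linear_on_E M -> linear_on_E (iter k M).
Proof.
move=> [Mb Ml]; elim: k => [|k [IHb IHl]]; first by [].
split=> [x bx | a x y bx bxy] /=; first exact/Mb/IHb.
by rewrite IHl // Ml //; apply: IHb.
Qed.

Lemma linear_poly_op (M : (nat -> R) -> nat -> R) (P : {poly R}) :
  linear_on_E M -> linear_on_E (poly_op P M).
Proof.
move=> linM; have iterb k := (linear_iter k linM).1.
have iterl k := (linear_iter k linM).2.
split=> [x bx | a x y bx byy].
  exact (bounded_sum (size P) (fun k => bounded_scale P`_k (iterb k x bx))).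
apply: funext => n; rewrite /poly_op mulr_sumr -big_split /=.
by apply: eq_bigr => k _; rewrite iterl // mulrDr mulrCA.
Qed.

Lemma linear_Mw p (w : nat -> R) : linear_on_E (Mw p w).
Proof.
split=> [x [B xB] | a x y _ _].
  apply: (@bounded_eventually _ p.-1 (B * \sum_(j < p) `|w j|)) => n le_pn.
  rewrite /Mw ltnNge le_pn /= mulr_sumr (le_trans (ler_norm_sum _ _ _)) //.
  by apply: ler_sum => j _; rewrite normrM mulrC ler_wpM2r.
apply: funext => n; rewrite /Mw.
case: ifP => _; under eq_bigr => j _ do rewrite mulrDr mulrCA.
  by rewrite big_split /= -mulr_sumr mulrDl mulrA.
by rewrite big_split /= -mulr_sumr.
Qed.

End Operators.

Section Lag.
Variable R : realType.

Lemma conv_eventually_inj (h g : {poly R}) N :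
  (forall x, bounded x -> forall n, (N <= n)%N -> conv h x n = conv g x n) ->
  h = g.
Proof.
move=> hg; apply/polyP => d.
have impulse_bounded : bounded (fun i => (i == N)%:R : R).
  by exists 1 => i; case: (i == N); rewrite ?normr1 ?normr0.
have := hg _ impulse_bounded (N + d)%N (leq_addr _ _).
by rewrite !conv_impulse ?leq_addr // addKn.
Qed.

Lemma is_lag_conv tau (M : (nat -> R) -> nat -> R) (h : {poly R}) N :
  linear_on_E M ->
  (forall x, bounded x -> forall n, (N <= n)%N -> M x n = conv h x n) ->
  forall L, is_lag tau M L <-> L = tau * h^`().[1].
Proof.
move=> linM M_conv L; split.
  move=> [_ [q [v [_ [M_window ->]]]]].
  have <- : window_poly q v = h.
    apply: (@conv_eventually_inj _ _ (maxn N q.-1)) => x bx n.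
    rewrite geq_max => /andP[le_Nn le_qn].
    by rewrite -window_conv // -M_window // M_conv.
  by rewrite horner1_deriv_window_poly.
move=> ->; split=> //.
pose q := (maxn N (size h)).+1.
have le_hq : (size h <= q)%N by rewrite ltnW // ltnS leq_maxr.
exists q, (fun j => h`_(q.-1 - j)); split=> //; split.
  move=> x bx n le_qn; rewrite M_conv //; last by rewrite (leq_trans _ le_qn) ?leq_maxl.
  by rewrite -{1}(window_poly_coefs le_hq) -window_conv.
by rewrite -{1}(window_poly_coefs le_hq) horner1_deriv_window_poly.
Qed.

End Lag.

Theorem proposition4 (R : realType) (p : nat) (tau : R) (w : nat -> R)
  (hp : (1 <= p)%N) (htau : 0 < tau)
  (hw : forall j, (j < p)%N -> 0 < w j)
  (hsum : \sum_(j < p) w j = 1)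
  (P : {poly R}) :
  (exists L1, is_lag tau (Mw p w) L1) /\
  (exists L2, is_lag tau (poly_op P (Mw p w)) L2) /\
  (forall L1 L2, is_lag tau (Mw p w) L1 ->
     is_lag tau (poly_op P (Mw p w)) L2 ->
     L2 = L1 * \sum_(k < size P) k%:R * P`_k /\
     L2 = L1 * (P^`()).[1]).
Proof.
pose W := window_poly p w.
have size_W : (size W <= p.-1.+1)%N := leq_trans (size_poly _ _) (leqSpred p).
have lag1 := is_lag_conv tau (linear_Mw p w) (fun x _ => @Mw_conv _ p w x).
have lag2 := is_lag_conv tau (linear_poly_op P (linear_Mw p w))
  (fun x _ => poly_op_conv size_W (@Mw_conv _ p w) x).
have chain : (P \Po W)^`().[1] = P^`().[1] * W^`().[1].
  by rewrite deriv_comp hornerM horner_comp horner1_window_poly hsum.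
split; first by exists (tau * W^`().[1]); apply/lag1.
split; first by exists (tau * (P \Po W)^`().[1]); apply/lag2.
move=> L1 L2 /lag1 -> /lag2 ->; rewrite -horner1_deriv chain.
by split; rewrite mulrCA [RHS]mulrC.
Qed.
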